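(* Let $X$ be a 1-reduced simplicial set, let $Q$ be a monoidal cubical set with multiplication written $(a,b)\mapsto a\cdot b$, and let $\tau=\{\tau_n:X_n\to Q_{n-1}\}_{n\ge 1}$ be a sequence of functions of degree $-1$. Let $f:{\bf \Omega}X\to Q$ be the monoidal map determined on words by $f(\bar x_1\cdots\bar x_k)=\tau(x_1)\cdots\tau(x_k)$. Then $\tau$ is a truncating twisting function if and only if $f$ is a map of cubical sets.
   Context: A simplicial set $X=\{X_n,\partial_i,s_i\}$ is 1-reduced if $X_0=X_1=\{*\}$. A cubical set $Q=\{Q_n\}_{n\ge0}$ has face operators $d_i^\epsilon:Q_n\to Q_{n-1}$ ($\epsilon=0,1$, $1\le i\le n$) and degeneracies $\eta_i:Q_n\to Q_{n+1}$ ($1\le i\le n+1$) satisfying the standard cubical identities. The product $Q\times Q'$ of cubical sets is $\bigcup_{p+q=n}Q_p\times Q'_q$ modulo $(\eta_{p+1}(a),b)\sim(a,\eta_1(b))$ with the obvious face and degeneracy operators; a monoidal cubical set is a cubical set $Q$ with an associative cubical map $Q\times Q\to Q$ having a unit $e\in Q_0$. A truncating twisting function is a sequence $\tau_n:X_n\to Q_{n-1}$, $n\ge1$, with: $\tau(x)=e$ for $x\in X_1$; $d_i^0\tau(x)=\tau(\partial_{i+1}\cdots\partial_n x)\cdot\tau(\partial_0\cdots\partial_{i-1}x)$ and $d_i^1\tau(x)=\tau(\partial_i x)$ for $1\le i\le n-1$, $x\in X_n$; and $\eta_n\tau(x)=\tau(s_n x)$ for $x\in X_n$. The monoidal cubical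 set ${\bf\Omega}X$: let $X^c$ be the graded set of formal expressions $\eta_{i_k}\cdots\eta_{i_1}(x)$, $x\in X_n$, $i_1\le\dots\le i_k$, $1\le i_j\le n+j-1$ (of degree $n+k$), containing $X$ ($k=0$). Let $\bar x$ denote the desuspension of $x\in X^c_{>0}$ (degree lowered by one). Let ${\bf\Omega}''X$ be the free graded monoid (without unit) on the $\bar x$, $x\in X^c_{>0}$, and ${\bf\Omega}'X$ its quotient by $\overline{\eta_{p+1}(x)}\cdot\bar y\sim\bar x\cdot\overline{\eta_1(y)}$ for $x\in X_{p+1}$, $y\in X$. For $x\in X_n$ set $d_i^0(\bar x)=\overline{\partial_{i+1}\cdots\partial_n x}\cdot\overline{\partial_0\cdots\partial_{i-1}x}$ and $d_i^1(\bar x)=\overline{\partial_i x}$, $1\le i\le n-1$, and $\eta_i(\bar x)=\overline{\eta_i(x)}$ (normalized). On a word $\bar x_1\cdots\bar x_k$ with $|\bar x_j|=m_j$, $m_{(q)}=m_1+\dots+m_q$, these operators act for $m_{(q-1)}<i\le m_{(q)}$ by applying the operator with index $i-m_{(q-1)}$ to the letter $\bar x_q$; the top degeneracy $\eta_n$ of a word of degree $n-1$ applies $\eta_{m_k+1}$ to the last letter; face operators are extended to degenerate elements so that the cubical identities hold. Finally ${\bf\Omega}X$ is the quotient of ${\bf\Omega}'X$ by $e\,a\sim a\,e\sim a$ where $e=\overline{s_0( * )}$, and $\eta_n(\bar x)\sim\overline{s_n(x)}$ for $x\in X_n$, $n>0$. It is a monoidal cubical set with unit $e$. *)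

(* Graded-set encoding of simplicial and
   cubical sets: a single carrier type with a degree function; the n-th
   component is {x | dim x = n}.  Structure maps are total functions whose
   behaviour is only constrained in the meaningful index ranges. *)
From mathcomp Require Import all_boot.
Set Implicit Arguments. Unset Strict Implicit. Unset Printing Implicit Defensive.

Record sSet := SSet {
  ss_car :> Type;
  sdim : ss_car -> nat;
  sface : nat -> ss_car -> ss_car;
  sdeg : nat -> ss_car -> ss_car;
  sdim_face : forall x i, 0 < sdim x -> i <= sdim x -> sdim (sface i x) = (sdim x).-1;
  sdim_deg : forall x i, i <= sdim x -> sdim (sdeg i x) = (sdim x).+1;
  sface_face : forall x i j, 1 < sdim x -> i < j -> j <= sdim x ->
    sface i (sface j x) = sface j.-1 (sface i x);
  sface_deg_lt : forall x i j, j <= sdim x -> i < j ->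
    sface i (sdeg j x) = sdeg j.-1 (sface i x);
  sface_deg_eq : forall x j, j <= sdim x -> sface j (sdeg j x) = x;
  sface_deg_eq1 : forall x j, j <= sdim x -> sface j.+1 (sdeg j x) = x;
  sface_deg_gt : forall x i j, j <= sdim x -> j.+1 < i -> i <= (sdim x).+1 ->
    sface i (sdeg j x) = sdeg j (sface i.-1 x);
  sdeg_deg : forall x i j, i <= j -> j <= sdim x ->
    sdeg i (sdeg j x) = sdeg j.+1 (sdeg i x)
}.

Definition one_reduced (X : sSet) (star : X) :=
  [/\ sdim star = 0, (forall x : X, sdim x = 0 -> x = star)
    & (forall x : X, sdim x = 1 -> x = sdeg 0 star)].

(* ---------- cubical sets: faces d_i^eps (1<=i<=n, eps : bool with
   false = 0, true = 1), degeneracies eta_i (1 <= i <= n+1) ------------- *)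
Record cSet := CSet {
  cs_car :> Type;
  cdim : cs_car -> nat;
  cface : nat -> bool -> cs_car -> cs_car;
  cdeg : nat -> cs_car -> cs_car;
  cdim_face : forall a i e, 1 <= i <= cdim a -> cdim (cface i e a) = (cdim a).-1;
  cdim_deg : forall a i, 1 <= i <= (cdim a).+1 -> cdim (cdeg i a) = (cdim a).+1;
  cface_face : forall a i j e e', 1 <= i -> i < j -> j <= cdim a ->
    cface i e (cface j e' a) = cface j.-1 e' (cface i e a);
  cface_deg_lt : forall a i j e, 1 <= j -> j < i -> i <= (cdim a).+1 ->
    cface j e (cdeg i a) = cdeg i.-1 (cface j e a);
  cface_deg_eq : forall a i e, 1 <= i <= (cdim a).+1 -> cface i e (cdeg i a) = a;
  cface_deg_gt : forall a i j e, 1 <= i -> i < j -> j <= (cdim a).+1 ->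
    cface j e (cdeg i a) = cdeg i (cface j.-1 e a);
  cdeg_deg : forall a i j, 1 <= i -> i <= j -> j <= (cdim a).+1 ->
    cdeg i (cdeg j a) = cdeg j.+1 (cdeg i a)
}.

(* ---------- monoidal cubical sets: an associative unital cubical map
   Q x Q -> Q; compatibility with the faces/degeneracies of the product
   (including the identification (eta_{p+1} a, b) ~ (a, eta_1 b)). ------ *)
Record mcSet := MCSet {
  mc_cset :> cSet;
  cmul : mc_cset -> mc_cset -> mc_cset;
  cunit : mc_cset;
  cdim_unit : cdim cunit = 0;
  cdim_mul : forall a b, cdim (cmul a b) = cdim a + cdim b;
  cmulA : associative cmul;
  cmul1 : left_id cunit cmul;
  cmulr1 : right_id cunit cmul;
  cface_mul_l : forall a b i e, 1 <= i <= cdim a ->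
    cface i e (cmul a b) = cmul (cface i e a) b;
  cface_mul_r : forall a b i e, cdim a < i <= cdim a + cdim b ->
    cface i e (cmul a b) = cmul a (cface (i - cdim a) e b);
  cdeg_mul_l : forall a b i, 1 <= i <= (cdim a).+1 ->
    cdeg i (cmul a b) = cmul (cdeg i a) b;
  cdeg_mul_r : forall a b i, cdim a < i <= (cdim a + cdim b).+1 ->
    cdeg i (cmul a b) = cmul a (cdeg (i - cdim a) b)
}.

Section Omega.
Variables (X : sSet) (star : X).

(* A letter (x, J) stands for the desuspension of the formal expression
   eta_{i_k} ... eta_{i_1}(x) of X^c, where J = [:: i_k; ...; i_1] lists the
   degeneracy indices outermost first (so rev J = [:: i_1; ...; i_k]). *)
Definition letter := (X * seq nat)%type.

Definition ldeg (a : letter) : nat := (sdim a.1).-1 + size a.2.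
Definition wdeg (w : seq letter) : nat := sumn (map ldeg w).

(* x in X_n with n > 0, i_1 < ... < i_k (normal form), 1 <= i_j <= n+j-1 *)
Definition valid_letter (a : letter) : bool :=
  [&& 0 < sdim a.1, sorted ltn (rev a.2)
    & all (fun k => (0 < nth 0 (rev a.2) k) && (nth 0 (rev a.2) k <= sdim a.1 + k))
          (iota 0 (size a.2))].

Definition valid_word (w : seq letter) : bool := (0 < size w) && all valid_letter w.

(* normalization of eta_i applied on top of eta_J, using
   eta_i eta_j = eta_{j+1} eta_i for i <= j *)
Definition ins (i : nat) (J : seq nat) : seq nat :=
  map succn [seq j <- J | i <= j] ++ i :: [seq j <- J | j < i].

Definition leta (i : nat) (a : letter) : letter := (a.1, ins i a.2).

(* degeneracies on words: index i in (m_(q-1), m_(q)] acts on letter q;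
   the top degeneracy acts on the last letter *)
Fixpoint weta (i : nat) (w : seq letter) : seq letter :=
  match w with
  | [::] => [::]
  | [:: a] => [:: leta i a]
  | a :: w' => if i <= ldeg a then leta i a :: w' else a :: weta (i - ldeg a) w'
  end.

Definition iterface (l : seq nat) (x : X) : X := foldr (@sface X) x l.

(* faces of a nondegenerate letter xbar, x in X_n, 1 <= i <= n-1:
   d_i^0 xbar = (d_{i+1}...d_n x)bar . (d_0...d_{i-1} x)bar,
   d_i^1 xbar = (d_i x)bar *)
Definition base_face (i : nat) (e : bool) (x : X) : seq letter :=
  if e then [:: (sface i x, [::])]
  else [:: (iterface (iota i.+1 (sdim x - i)) x, [::]);
           (iterface (iota 0 i) x, [::])].

(* faces of degenerate letters, determined by the cubical identities *)
Fixpoint lface_rec (i : nat) (e : bool) (x : X) (J : seq nat) : seq letter :=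
  match J with
  | [::] => base_face i e x
  | j :: J' =>
      if i < j then weta j.-1 (lface_rec i e x J')
      else if i == j then [:: (x, J')]
      else weta j (lface_rec i.-1 e x J')
  end.

Definition lface (i : nat) (e : bool) (a : letter) : seq letter :=
  lface_rec i e a.1 a.2.

Fixpoint wface (i : nat) (e : bool) (w : seq letter) : seq letter :=
  match w with
  | [::] => [::]
  | a :: w' => if i <= ldeg a then lface i e a ++ w'
               else a :: wface (i - ldeg a) e w'
  end.

Definition unit_letter : letter := (sdeg 0 star, [::]).

Inductive omega_base : seq letter -> seq letter -> Prop :=
| ob_unit_l a : valid_letter a -> omega_base [:: unit_letter; a] [:: a]
| ob_unit_r a : valid_letter a -> omega_base [:: a; unit_letter] [:: a]
| ob_top (x : X) : 0 < sdim x ->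
    omega_base [:: (x, [:: sdim x])] [:: (sdeg (sdim x) x, [::])]
| ob_shift (x y : X) : 0 < sdim x -> 0 < sdim y ->
    omega_base [:: (x, [:: sdim x]); (y, [::])] [:: (x, [::]); (y, [:: 1])].

Inductive omega_eq : seq letter -> seq letter -> Prop :=
| oe_ctx u v a b : all valid_letter u -> all valid_letter v -> omega_base a b ->
    omega_eq (u ++ a ++ v) (u ++ b ++ v)
| oe_refl w : omega_eq w w
| oe_sym w1 w2 : omega_eq w1 w2 -> omega_eq w2 w1
| oe_trans w1 w2 w3 : omega_eq w1 w2 -> omega_eq w2 w3 -> omega_eq w1 w3.

End Omega.

Section Twisting.
Variables (X : sSet) (Q : mcSet) (tau : X -> Q).

Definition degree_minus_one : Prop :=
  forall x : X, 0 < sdim x -> cdim (tau x) = (sdim x).-1.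

Definition truncating_twisting : Prop :=
  [/\ (forall x : X, sdim x = 1 -> tau x = cunit Q),
      (forall (x : X) i, 1 <= i -> i < sdim x ->
         cface i false (tau x) =
           cmul (tau (iterface (iota i.+1 (sdim x - i)) x)) (tau (iterface (iota 0 i) x))
         /\ cface i true (tau x) = tau (sface i x))
    & (forall x : X, 0 < sdim x -> cdeg (sdim x) (tau x) = tau (sdeg (sdim x) x))].

Definition fl (a : @letter X) : Q := foldr (@cdeg Q) (tau a.1) a.2.

Fixpoint qprod (l : seq Q) : Q :=
  match l with
  | [::] => cunit Q
  | [:: a] => a
  | a :: l' => cmul a (qprod l')
  end.

Definition fw (w : seq (@letter X)) : Q := qprod (map fl w).

Definition omega_map_is_cubical (star : X) : Prop :=
  [/\ fw [:: unit_letter star] = cunit Q,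
      (forall w1 w2, omega_eq star w1 w2 -> fw w1 = fw w2),
      (forall w, valid_word w -> cdim (fw w) = wdeg w),
      (forall w i e, valid_word w -> 1 <= i <= wdeg w ->
         fw (wface i e w) = cface i e (fw w))
    & (forall w i, valid_word w -> 1 <= i <= (wdeg w).+1 ->
         fw (weta i w) = cdeg i (fw w))].

End Twisting.

(* f is the monoidal extension of tau, and the operators of Omega X act on a
   word letter by letter, shifted by degree exactly as in the product Q x Q;
   so f is cubical as soon as it commutes with the operators on single
   letters.  On a nondegenerate letter these identities are literally the
   twisting conditions on tau.  On a degenerate letter the operators of
   Omega X are defined through the cubical identities, which hold in Q as
   well, so they reduce to the nondegenerate case.  The relations of Omega X
   are respected because tau (s_0 star) = e and eta_n tau = tau s_n.
   Conversely, one-letter words give back the twisting conditions. *)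

From mathcomp Require Import all_boot zify.
Set Implicit Arguments. Unset Strict Implicit. Unset Printing Implicit Defensive.

Section Letters.
Variable X : sSet.

(* The normal-form condition of [valid_letter], restated recursively on the
   degeneracy list (outermost index first) so that its stability under [ins]
   goes by induction. *)
Fixpoint admissible (n : nat) (J : seq nat) : bool :=
  if J is j :: J' then
    [&& 0 < j, j <= (n + size J').+1, all (fun k => k < j) J' & admissible n J']
  else true.

Definition wf_letter (a : letter X) : bool :=
  (0 < sdim a.1) && admissible (sdim a.1).-1 a.2.

Definition wf_word (w : seq (letter X)) : bool := (0 < size w) && all wf_letter w.

Lemma valid_wf_letter (a : letter X) : valid_letter a -> wf_letter a.
Proof.
case: a => x J; rewrite /valid_letter /wf_letter /= => /and3P[-> srt rng] /=.
have {rng} : forall k, k < size J -> 0 < nth 0 (rev J) k <= sdim x + k.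
  by move=> k hk; apply: (allP rng); rewrite mem_iota.
rewrite rev_sorted in srt.
elim: J srt => [|j J IH] //= srt rng.
have tr : transitive (fun z y : nat => y < z) by move=> ? ? ? ? ?; lia.
move: srt; rewrite (path_sortedE tr) => /andP[hJ sJ].
have := rng (size J) (ltnSn _).
rewrite rev_cons nth_rcons size_rev ltnn eqxx => /andP[-> jle] /=.
apply/and3P; split=> //; first lia.
apply: IH => // k hk.
by have := rng k (ltnW hk); rewrite rev_cons nth_rcons size_rev hk.
Qed.

Lemma valid_wf_word (w : seq (letter X)) : valid_word w -> wf_word w.
Proof.
by case/andP=> sz aw; rewrite /wf_word sz; apply: sub_all aw => a /valid_wf_letter.
Qed.

Lemma size_ins i J : size (ins i J) = (size J).+1.
Proof.
rewrite /ins size_cat size_map /= addnS !size_filter.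
rewrite -[in RHS](count_predC (fun j => i <= j)); congr (_ + _).+1.
by apply: eq_count => j /=; rewrite ltnNge.
Qed.

Lemma ins_cons i j J : all (fun k => k < j) J ->
  ins i (j :: J) = if i <= j then j.+1 :: ins i J else i :: j :: J.
Proof.
move=> hJ; rewrite /ins /=; case: leqP => //= lt_ji.
have -> : [seq k <- J | i <= k] = [::].
  by rewrite -(filter_pred0 J); apply: eq_in_filter => k /(allP hJ) /=; lia.
by rewrite (all_filterP _) //; apply: sub_all hJ => k /=; lia.
Qed.

Lemma ins_bounded J i b : all (fun k => k < b) J -> i <= b ->
  all (fun k => k < b.+1) (ins i J).
Proof.
move=> hJ hi; rewrite /ins all_cat /= all_map !all_filter.
by apply/and3P; split; [apply: sub_all hJ => k /= | | apply: sub_all hJ => k /=]; lia.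
Qed.

Lemma admissible_ins n J i : admissible n J -> 1 <= i <= (n + size J).+1 ->
  admissible n (ins i J).
Proof.
elim: J i => [|j J IH] i /=; first by move=> _ hi; rewrite /ins /=; lia.
case/and4P => j0 jle hJ wJ hi; rewrite ins_cons //.
case: ifP => hij /=.
  by rewrite IH ?ins_bounded ?size_ins //; lia.
rewrite j0 jle hJ wJ (sub_all _ hJ) => [|k /=]; last lia.
by apply/and3P; split=> //; lia.
Qed.

Lemma ldeg_leta i (a : letter X) : ldeg (leta i a) = (ldeg a).+1.
Proof. by rewrite /ldeg size_ins addnS. Qed.

Lemma wf_leta i (a : letter X) : wf_letter a -> 1 <= i <= (ldeg a).+1 ->
  wf_letter (leta i a).
Proof. by case/andP=> xp wJ hi; rewrite /wf_letter xp admissible_ins. Qed.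

Lemma wdeg_cons (a : letter X) w : wdeg (a :: w) = ldeg a + wdeg w.
Proof. by []. Qed.

Lemma weta_cons_cons i (a b : letter X) W :
  weta i [:: a, b & W] =
  if i <= ldeg a then [:: leta i a, b & W] else a :: weta (i - ldeg a) (b :: W).
Proof. by []. Qed.

Lemma wdeg_weta i (W : seq (letter X)) : 0 < size W ->
  wdeg (weta i W) = (wdeg W).+1.
Proof.
elim: W i => [|a [|b W] IH] i // _; first by rewrite /wdeg /= ldeg_leta.
rewrite weta_cons_cons; case: ifP => _; first by rewrite /wdeg /= ldeg_leta.
by rewrite !wdeg_cons IH // addnS.
Qed.

Lemma wf_weta i (W : seq (letter X)) : wf_word W -> 1 <= i <= (wdeg W).+1 ->
  wf_word (weta i W).
Proof.
elim: W i => [|a [|b W] IH] i //.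
  by rewrite /wf_word /wdeg /= !andbT addn0 => wa hi; apply: wf_leta.
rewrite weta_cons_cons /wf_word /= => /andP[wa wW] hi; case: ifP => hia /=.
  by rewrite wf_leta ?wW //; lia.
have /andP[_ ->] := IH (i - ldeg a) wW ltac:(rewrite /wdeg /= in hi *; lia).
by rewrite wa.
Qed.

Lemma sdim_iterface k m (x : X) : k <= sdim x -> m + k <= (sdim x).+1 ->
  sdim (iterface (iota m k) x) = sdim x - k.
Proof.
elim: k m => [|k IH] m hk hmk /=; first by rewrite subn0.
by rewrite sdim_face -/(iterface _ x) IH //; lia.
Qed.

Lemma wf_lface_rec i e (x : X) J : wf_letter (x, J) -> 1 <= i <= ldeg (x, J) ->
  wf_word (lface_rec i e x J) /\ wdeg (lface_rec i e x J) = (ldeg (x, J)).-1.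
Proof.
elim: J i => [|j J IH] i.
  rewrite /wf_letter /ldeg /= addn0 andbT => xp hi; case: e; rewrite /base_face.
    by rewrite /wf_word /wf_letter /wdeg /ldeg /= sdim_face /=; lia.
  by rewrite /wf_word /wf_letter /wdeg /ldeg /= !sdim_iterface /=; lia.
rewrite /wf_letter /ldeg /= => /andP[xp /and4P[j0 jle _ wJ]] hi.
have wxJ : wf_letter (x, J) by rewrite /wf_letter xp.
case: (ltngtP i j) => hij.
- have [w1 d1] := IH i wxJ ltac:(rewrite /ldeg /=; lia).
  rewrite /ldeg /= in d1.
  split; first by apply: wf_weta w1 _; lia.
  by rewrite wdeg_weta ?d1; [lia | case/andP: w1].
- have [w1 d1] := IH i.-1 wxJ ltac:(rewrite /ldeg /=; lia).
  rewrite /ldeg /= in d1.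
  split; first by apply: wf_weta w1 _; lia.
  by rewrite wdeg_weta ?d1; [lia | case/andP: w1].
- by subst i; rewrite /wf_word /= wxJ /wdeg /ldeg /=; split; lia.
Qed.

End Letters.

Arguments wf_letter {X} a.

Section Twisting.
Variables (X : sSet) (Q : mcSet) (tau : X -> Q).
Hypothesis tau_deg : degree_minus_one tau.

Local Notation fl := (fl tau).
Local Notation fw := (fw tau).

Lemma fw_cons a w : fw (a :: w) = cmul (fl a) (fw w).
Proof. by case: w => [|b w] //=; rewrite /fw /= cmulr1. Qed.

Lemma fw_cat u v : fw (u ++ v) = cmul (fw u) (fw v).
Proof.
elim: u => [|a u IH] /=; first by rewrite /fw /= cmul1.
by rewrite !fw_cons IH cmulA.
Qed.

Lemma cdim_fl a : wf_letter a -> cdim (fl a) = ldeg a.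
Proof.
case: a => x J; rewrite /wf_letter /ldeg /fl /= => /andP[xp].
elim: J => [|j J IH] /=; first by rewrite tau_deg // addn0.
by case/and4P => j0 jle _ /IH dJ; rewrite cdim_deg dJ; lia.
Qed.

Lemma fl_cons x j J : fl (x, j :: J) = cdeg j (fl (x, J)).
Proof. by []. Qed.

Lemma cdim_fw w : all wf_letter w -> cdim (fw w) = wdeg w.
Proof.
elim: w => [|a w IH] /=; first by rewrite /fw /= cdim_unit.
by case/andP => wa ww; rewrite fw_cons cdim_mul IH // cdim_fl.
Qed.

Lemma fl_leta i a : wf_letter a -> 1 <= i <= (ldeg a).+1 ->
  fl (leta i a) = cdeg i (fl a).
Proof.
case: a => x J; rewrite /wf_letter /leta /ldeg /= => /andP[xp].
elim: J i => [|j J IH] i //= /and4P[j0 jle hJ wJ] hi.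
rewrite ins_cons //; case: ifP => hij //.
have dJ : cdim (fl (x, J)) = (sdim x).-1 + size J by rewrite cdim_fl // /wf_letter xp.
rewrite /fl /= in IH dJ *; rewrite IH //; last lia.
by rewrite [RHS]cdeg_deg //; lia.
Qed.

Lemma fw_weta i W : wf_word W -> 1 <= i <= (wdeg W).+1 ->
  fw (weta i W) = cdeg i (fw W).
Proof.
elim: W i => [|a [|b W] IH] i //.
  by rewrite /wf_word /wdeg /= !andbT addn0 => wa hi; rewrite /fw /= fl_leta.
rewrite weta_cons_cons => /andP[_]; rewrite -cat1s all_cat => /andP[/andP[wa _] wW] hi.
have da := cdim_fl wa; have dW := cdim_fw wW.
have wbW : wf_word (b :: W) by rewrite /wf_word wW.
rewrite wdeg_cons in hi; rewrite [fw (_ :: b :: _)]fw_cons.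
case: ifP => hia; rewrite fw_cons.
  by rewrite fl_leta ?cdeg_mul_l ?da //; lia.
by rewrite IH ?cdeg_mul_r ?da //; lia.
Qed.

Section Truncating.
Hypothesis tau_tw : truncating_twisting tau.

Lemma fw_base_face i e x : 1 <= i < sdim x -> fw (base_face i e x) = cface i e (tau x).
Proof.
case: tau_tw => _ tw_face _ /andP[i1 ix].
by have [F0 F1] := tw_face x i i1 ix; case: e; rewrite /base_face /fw /=.
Qed.

Lemma fw_lface_rec i e x J : wf_letter (x, J) -> 1 <= i <= ldeg (x, J) ->
  fw (lface_rec i e x J) = cface i e (fl (x, J)).
Proof.
elim: J i => [|j J IH] i.
  by rewrite /wf_letter /ldeg /= addn0 => /andP[xp _] hi; rewrite fw_base_face //; lia.
move=> /andP[xp /and4P[j0 jle _ wJ]] hi.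
rewrite /= in xp jle; rewrite /ldeg /= in hi.
have wxJ : wf_letter (x, J) by rewrite /wf_letter xp.
have dJ := cdim_fl wxJ; rewrite /ldeg /= in dJ.
rewrite [lface_rec _ _ _ _]/= fl_cons.
case: (ltngtP i j) => hij.
- have [w1 d1] := wf_lface_rec e wxJ (i := i) ltac:(rewrite /ldeg /=; lia).
  rewrite /ldeg /= in d1.
  by rewrite fw_weta ?IH ?d1 ?cface_deg_lt //; rewrite /ldeg /=; lia.
- have [w1 d1] := wf_lface_rec e wxJ (i := i.-1) ltac:(rewrite /ldeg /=; lia).
  rewrite /ldeg /= in d1.
  by rewrite fw_weta ?IH ?d1 ?cface_deg_gt //; rewrite /ldeg /=; lia.
- by subst i; rewrite /fw /= cface_deg_eq //; lia.
Qed.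

Lemma fw_wface i e w : all wf_letter w -> 1 <= i <= wdeg w ->
  fw (wface i e w) = cface i e (fw w).
Proof.
elim: w i => [|[x J] w IH] i /=; first by rewrite /wdeg /=; lia.
case/andP => wa ww; rewrite wdeg_cons => hi.
have da := cdim_fl wa; have dw := cdim_fw ww.
rewrite fw_cons; case: ifP => h.
  by rewrite fw_cat fw_lface_rec ?cface_mul_l ?fw_cons //;
    rewrite /ldeg /= in da h *; lia.
by rewrite fw_cons IH ?cface_mul_r ?da //; lia.
Qed.

Variable star : X.
Hypothesis star0 : sdim star = 0.

Lemma fl_unit_letter : fl (unit_letter star) = cunit Q.
Proof. by case: tau_tw => tw_unit _ _; rewrite /fl /= tw_unit // sdim_deg // star0. Qed.

Lemma fw_omega_base u v : omega_base star u v -> fw u = fw v.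
Proof.
case: tau_tw => _ _ tw_top.
case=> [a _|a _|x xp|x y xp yp].
- by rewrite fw_cons fl_unit_letter cmul1.
- by rewrite fw_cons -[fw [:: _]]/(fl _) fl_unit_letter cmulr1.
- by rewrite /fw /fl /= tw_top.
- have dx := tau_deg xp; rewrite /fw /fl /= -cdeg_mul_l ?dx; last lia.
  by rewrite cdeg_mul_r dx; [congr (cmul _ (cdeg _ _)) | ]; lia.
Qed.

Lemma fw_omega_eq u v : omega_eq star u v -> fw u = fw v.
Proof.
elim=> // [u' v' a b _ _ /fw_omega_base eq_ab | _ _ _ _ -> _ ->] //.
by rewrite !fw_cat eq_ab.
Qed.

Lemma omega_map_is_cubical_of_twisting : omega_map_is_cubical tau star.
Proof.
split; [exact: fl_unit_letter | exact: fw_omega_eq | | |] => w.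
- by move/valid_wf_word/andP=> [_ /cdim_fw].
- by move=> i e /valid_wf_word/andP[_ ww]; apply: fw_wface.
- by move=> i /valid_wf_word ww; apply: fw_weta.
Qed.

End Truncating.

Lemma twisting_of_omega_map_is_cubical star :
  one_reduced star -> omega_map_is_cubical tau star -> truncating_twisting tau.
Proof.
case=> _ _ dim1_unit [f_unit f_eq _ f_face _]; split.
- by move=> x /dim1_unit ->.
- move=> x i i1 ix.
  have vx : valid_word [:: (x, [::])] by rewrite /valid_word /valid_letter /=; lia.
  have hi : 1 <= i <= wdeg [:: (x, [::])] by rewrite /wdeg /ldeg /=; lia.
  have ile : i <= ldeg (x, [::]) by rewrite /ldeg /=; lia.
  have := f_face _ i false vx hi; have := f_face _ i true vx hi.
  by rewrite /= ile /fw /= => <- <-.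
- move=> x xp.
  have := f_eq _ _ (oe_ctx (u := [::]) (v := [::]) isT isT (ob_top star xp)).
  by rewrite /fw.
Qed.

End Twisting.

Theorem mainTheorem1 (X : sSet) (star : X) (Q : mcSet) (tau : X -> Q) :
  one_reduced star -> degree_minus_one tau ->
  (truncating_twisting tau <-> omega_map_is_cubical tau star).
Proof.
move=> star_red tau_deg; split; last exact: twisting_of_omega_map_is_cubical.
by case: star_red => star0 _ _ tau_tw; apply: omega_map_is_cubical_of_twisting.
Qed.
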